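(* Let $\mathbb Z\langle X\rangle$ be the free unital associative ring on $X=\{x_1,x_2,\dots\}$ and let $I$ be the left ideal of $\mathbb Z\langle X\rangle$ generated by a set $S\subset\Gamma$. Then \[I=\Gamma\cdot S\;\oplus\bigoplus_{s\ge1;\ i_1\le\dots\le i_s}x_{i_1}x_{i_2}\cdots x_{i_s}\,\Gamma\cdot S,\] where $\Gamma\cdot S$ is the left ideal of the ring $\Gamma$ generated by $S$. In particular, $I\cap\Gamma=\Gamma\cdot S$.
   Context: $\Gamma$ is the unital subring of $\mathbb Z\langle X\rangle$ generated by all left-normed commutators $[x_{i_1},\dots,x_{i_l}]$ with $l\ge2$ (where $[a,b]=ab-ba$, $[a_1,\dots,a_n]=[[a_1,\dots,a_{n-1}],a_n]$). The direct sums are of additive subgroups. *)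

From HB Require Import structures.
From mathcomp Require Import all_boot all_order all_algebra.
From mathcomp.multinomials Require Import monalg.
Set Implicit Arguments. Unset Strict Implicit. Unset Printing Implicit Defensive.
Import GRing.Theory.
Local Open Scope ring_scope.

(* Z<X> : free unital associative ring on X = {x_0, x_1, ...}, realised as the
   monoid ring over int of the free monoid on nat (words = fmonom nat). *)
Notation ZX := {malg int[fmonom nat]}.

Definition xv (i : nat) : ZX := << fmu i >>.

Definition comm (a b : ZX) : ZX := a * b - b * a.

Definition lncomm (i j : nat) (ks : seq nat) : ZX :=
  foldl (fun a k => comm a (xv k)) (comm (xv i) (xv j)) ks.

Inductive Gamma : ZX -> Prop :=
  | Gamma_1 : Gamma 1
  | Gamma_comm i j ks : Gamma (lncomm i j ks)
  | Gamma_add a b : Gamma a -> Gamma b -> Gamma (a + b)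
  | Gamma_opp a : Gamma a -> Gamma (- a)
  | Gamma_mul a b : Gamma a -> Gamma b -> Gamma (a * b).

Inductive GammaIdeal (S : ZX -> Prop) : ZX -> Prop :=
  | GI_gen s : S s -> GammaIdeal S s
  | GI_0 : GammaIdeal S 0
  | GI_add a b : GammaIdeal S a -> GammaIdeal S b -> GammaIdeal S (a + b)
  | GI_lmul g a : Gamma g -> GammaIdeal S a -> GammaIdeal S (g * a).

Inductive LeftIdeal (S : ZX -> Prop) : ZX -> Prop :=
  | LI_gen s : S s -> LeftIdeal S s
  | LI_0 : LeftIdeal S 0
  | LI_add a b : LeftIdeal S a -> LeftIdeal S b -> LeftIdeal S (a + b)
  | LI_lmul r a : LeftIdeal S a -> LeftIdeal S (r * a).

Definition mono (w : seq nat) : ZX := \prod_(i <- w) xv i.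

(* the summand x_{i1}...x_{is} (Gamma . S); for w = [::] it is Gamma . S *)
Definition summand (S : ZX -> Prop) (w : seq nat) (q : ZX) : Prop :=
  exists2 a, GammaIdeal S a & q = mono w * a.

Definition sumFamily (S : ZX -> Prop) (ws : seq (seq nat)) (f : seq nat -> ZX) :=
  uniq ws /\ (forall w, w \in ws -> sorted leq w /\ summand S w (f w)).

From HB Require Import structures.
From mathcomp Require Import all_boot all_order all_algebra zify.
From mathcomp.multinomials Require Import monalg.
Import GRing.Theory Num.Theory.
Set Implicit Arguments. Unset Strict Implicit. Unset Printing Implicit Defensive.
Local Open Scope ring_scope.

(* Spanning: x_i x_j = x_j x_i + [x_i, x_j], and a commutator g in Gamma moves right
   past a letter as g x_k = x_k g + [g, x_k] with [g, x_k] again in Gamma.  Inserting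
   letters one at a time into sorted words (induction on length, where the commutator
   terms are shorter) writes every word times an element of Gamma.S as a sum of sorted
   words times elements of Gamma.S.

   Directness: the substitution x_M |-> x_M + t into Z<X>[t] fixes every commutator
   (t is central), hence all of Gamma.  Taking the coefficient of t is therefore right
   Gamma-linear, and when M is the smallest letter it sends a sorted word w = x_M^c v,
   with x_M not in v, to c x_M^(c-1) v and kills sorted words without x_M.  Applying it
   to a vanishing sum and inducting on the total length of the words, Z<X> having no
   additive torsion, shows that every summand vanishes.  An element of Gamma is fixed
   by the substitution too, so it coincides with its component on the empty word. *)

Lemma ltn_sum_seq (T : eqType) (r : seq T) (F G : T -> nat) :
  {in r, forall x, F x <= G x}%N -> (exists2 x, x \in r & F x < G x)%N ->
  (\sum_(x <- r) F x < \sum_(x <- r) G x)%N.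
Proof.
move=> leFG [x xr ltFGx]; rewrite !(big_rem x xr) /=.
rewrite -addSn leq_add // big_seq [X in (_ <= X)%N]big_seq leq_sum // => y.
by move/mem_rem; exact: leFG.
Qed.

Lemma big_mem_uniq (R : Type) (idx : R) (op : Monoid.com_law idx)
    (T : eqType) (s t : seq T) (F : T -> R) :
  uniq s -> uniq t -> {subset t <= s} ->
  \big[op/idx]_(x <- s | x \in t) F x = \big[op/idx]_(x <- t) F x.
Proof.
move=> us ut ts; rewrite -big_filter; apply/perm_big/uniq_perm => //.
  exact: filter_uniq.
by move=> x; rewrite mem_filter andb_idr //; exact: ts.
Qed.

Section Bracket.
Variable R : pzRingType.
Implicit Types a b c : R.

Definition lie a b := a * b - b * a.

Lemma lieDl a b c : lie (a + b) c = lie a c + lie b c.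
Proof. by rewrite /lie mulrDl mulrDr opprD addrACA. Qed.

Lemma lieNl a c : lie (- a) c = - lie a c.
Proof. by rewrite /lie mulNr mulrN opprK opprB addrC. Qed.

Lemma lieMl a b c : lie (a * b) c = a * lie b c + lie a c * b.
Proof. by rewrite /lie mulrBr mulrBl !mulrA addrA subrK. Qed.

Lemma lie_comm a b : GRing.comm a b -> lie a b = 0.
Proof. by rewrite /lie => ->; rewrite subrr. Qed.

Lemma mulrCA_lie a b c : a * (b * c) = b * (a * c) + lie a b * c.
Proof. by rewrite /lie mulrBl !mulrA addrC subrK. Qed.

End Bracket.

Section Words.
Variables (R : pzRingType) (X : nat -> R).

Definition word (w : seq nat) : R := \prod_(i <- w) X i.

Lemma word_nil : word [::] = 1.
Proof. exact: big_nil. Qed.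

Lemma word_cons j w : word (j :: w) = X j * word w.
Proof. exact: big_cons. Qed.

Lemma word_cat u v : word (u ++ v) = word u * word v.
Proof. exact: big_cat. Qed.

Definition wmul (A : R -> Prop) (w : seq nat) (q : R) := exists2 a, A a & q = word w * a.

Lemma wmul0 (A : R -> Prop) w : A 0 -> wmul A w 0.
Proof. by exists 0; rewrite ?mulr0. Qed.

Lemma wmulD (A : R -> Prop) w p q : (forall a b, A a -> A b -> A (a + b)) ->
  wmul A w p -> wmul A w q -> wmul A w (p + q).
Proof. by move=> AD [a Aa ->] [b Ab ->]; exists (a + b); [exact: AD | rewrite mulrDr]. Qed.

Lemma wmulB (A : R -> Prop) w p q : (forall a b, A a -> A b -> A (a - b)) ->
  wmul A w p -> wmul A w q -> wmul A w (p - q).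
Proof. by move=> AB [a Aa ->] [b Ab ->]; exists (a - b); [exact: AB | rewrite mulrBr]. Qed.

End Words.

Section SortedSpan.
Variables (R : pzRingType) (X : nat -> R) (G N : R -> Prop).
Hypothesis G_lieX : forall g k, G g -> G (lie g (X k)).
Hypothesis G_lieXX : forall i j, G (lie (X i) (X j)).
Hypothesis N_lmul : forall g a, G g -> N a -> N (g * a).

Local Notation word := (word X).

Inductive wspan (P : pred (seq nat)) : R -> Prop :=
  | wspan0 : wspan P 0
  | wspanD p q : wspan P p -> wspan P q -> wspan P (p + q)
  | wspan_word w a : P w -> N a -> wspan P (word w * a).

Lemma wspan_sum (I : Type) P (r : seq I) (F : I -> R) :
  (forall i, wspan P (F i)) -> wspan P (\sum_(i <- r) F i).
Proof. by move=> h; elim/big_ind: _ => //; [exact: wspan0 | exact: wspanD]. Qed.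

Lemma wspan_lmul c (P P' : pred (seq nat)) p : wspan P p ->
  (forall w a, P w -> N a -> wspan P' (c * (word w * a))) -> wspan P' (c * p).
Proof.
move=> sp gen; elim: sp => [|p1 p2 _ h1 _ h2|w a]; last exact: gen.
- by rewrite mulr0; exact: wspan0.
- by rewrite mulrDr; exact: wspanD.
Qed.

Lemma wspan_bind (P P' : pred (seq nat)) p : wspan P p ->
  (forall w a, P w -> N a -> wspan P' (word w * a)) -> wspan P' p.
Proof.
move=> sp gen; rewrite -[p]mul1r; apply: (wspan_lmul sp) => w a Pw Na.
by rewrite mul1r; exact: gen.
Qed.

Lemma wspan_sub (P P' : pred (seq nat)) p : (forall w, P w -> P' w) ->
  wspan P p -> wspan P' p.
Proof.
move=> sPP' sp; apply: (wspan_bind sp) => w a Pw Na.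
by apply: wspan_word => //; exact: sPP'.
Qed.

Lemma wspan_consl j (P P' : pred (seq nat)) p : (forall w, P w -> P' (j :: w)) ->
  wspan P p -> wspan P' (X j * p).
Proof.
move=> PP' sp; apply: (wspan_lmul sp) => w a Pw Na.
by rewrite mulrA -word_cons; apply: wspan_word => //; exact: PP'.
Qed.

Lemma lmul_word_subseq q g a : G g -> N a ->
  wspan (subseq^~ q) (g * (word q * a)).
Proof.
elim: q g => [|j q IH] g Gg Na.
  rewrite word_nil mul1r -[g * a]mul1r -(word_nil X).
  by apply: wspan_word => //; exact: N_lmul.
rewrite word_cons -mulrA mulrCA_lie; apply: wspanD.
  by apply: wspan_consl (IH g Gg Na) => w /=; rewrite eqxx.
apply: wspan_sub (IH _ (G_lieX j Gg) Na) => w /= sw.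
exact: subseq_trans sw (subseq_cons q j).
Qed.

Definition sorted_over (P : pred nat) (n : nat) : pred (seq nat) :=
  fun w => [&& sorted leq w, all P w & size w <= n]%N.

Lemma sorted_over_widen P m n w : (m <= n)%N ->
  sorted_over P m w -> sorted_over P n w.
Proof. by rewrite /sorted_over => mn /and3P [-> -> /leq_trans /(_ mn)]. Qed.

Definition sorted_span_upto n := forall P u a, (size u <= n)%N -> all P u -> N a ->
  wspan (sorted_over P (size u)) (word u * a).

Lemma insert_letter n : sorted_span_upto n -> forall P i w a,
  sorted leq w -> (size w <= n)%N -> all P w -> P i -> N a ->
  wspan (sorted_over P (size w).+1) (X i * (word w * a)).
Proof.
move=> IHn P i w; elim: w P => [|j w IHw] P a sw szw Pw Pi Na.
  rewrite word_nil mul1r -[X i]mulr1 -(word_nil X) -word_cons.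
  by apply: wspan_word; rewrite //= /sorted_over /= Pi.
move: sw Pw => /= sw /andP [Pj Pw].
have [ij|ji] := leqP i j.
  rewrite mulrA -word_cons; apply: wspan_word => //.
  by rewrite /sorted_over /= ij sw Pi Pj Pw ltnS leqnn.
rewrite word_cons -mulrA mulrCA_lie; apply: wspanD.
  pose Pj' := fun k => P k && (j <= k)%N.
  have Pj'w : all Pj' w.
    apply/allP => k kw.
    by rewrite /Pj' (allP Pw k kw) (allP (order_path_min leq_trans sw) k kw).
  apply: wspan_consl (IHw Pj' a (path_sorted sw) (ltnW szw) Pj'w _ Na).
    move=> v /and3P [sv /allP Pv szv].
    have jv : all (leq j) v by apply/allP => k /Pv /andP [].
    have Pv' : all P v by apply/allP => k /Pv /andP [].
    by rewrite /sorted_over /= (path_min_sorted jv) sv Pj Pv' ltnS.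
  by rewrite /Pj' Pi (ltnW ji).
apply: (wspan_bind (lmul_word_subseq w (G_lieXX i j) Na)) => v b /= vw Nb.
have szv : (size v <= size w)%N := size_subseq vw.
have Pv : all P v by apply/allP => k /(mem_subseq vw) /(allP Pw).
have szvn : (size v <= n)%N by move: szw => /= szw; lia.
by apply: wspan_sub (IHn P v b szvn Pv Nb) => u; apply: sorted_over_widen; lia.
Qed.

Lemma sorted_span_all n : sorted_span_upto n.
Proof.
elim: n => [|n IHn] P [|i v] a //= szu Pu Na.
- by apply: wspan_word.
- by apply: wspan_word.
rewrite word_cons -mulrA; move: Pu => /andP [Pi Pv].
apply: (wspan_lmul (IHn P v a szu Pv Na)) => w b /and3P [sw Pw szw] Nb.
apply: wspan_sub (insert_letter IHn sw (leq_trans szw szu) Pw Pi Nb) => u.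
exact: sorted_over_widen.
Qed.

Lemma wspan_sorted_word u a : N a -> wspan (sorted leq) (word u * a).
Proof.
move=> Na; have := sorted_span_all (leqnn (size u)) (all_predT u) Na.
by apply: wspan_sub => w /and3P [].
Qed.

Hypothesis N0 : N 0.
Hypothesis ND : forall a b, N a -> N b -> N (a + b).

Lemma wspan_family P p : wspan P p -> exists ws (f : seq nat -> R),
  [/\ uniq ws, {in ws, forall w, P w /\ wmul X N w (f w)} & p = \sum_(w <- ws) f w].
Proof.
elim=> {p} [|p q _ [ws1 [f1 [u1 h1 ->]]] _ [ws2 [f2 [u2 h2 ->]]]|w a Pw Na].
- by exists [::], (fun _ => 0); rewrite big_nil.
- pose restr (ws : seq (seq nat)) (f : seq nat -> R) w := if w \in ws then f w else 0.
  have restrP (ws : seq (seq nat)) f w : {in ws, forall w, P w /\ wmul X N w (f w)} ->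
      wmul X N w (restr ws f w).
    by rewrite /restr; case: ifP => [wi /(_ w wi) [] | _ _]; last exact: wmul0.
  exists (undup (ws1 ++ ws2)), (fun w => restr ws1 f1 w + restr ws2 f2 w).
  have sub1 : {subset ws1 <= undup (ws1 ++ ws2)}.
    by move=> w wi; rewrite mem_undup mem_cat wi.
  have sub2 : {subset ws2 <= undup (ws1 ++ ws2)}.
    by move=> w wi; rewrite mem_undup mem_cat wi orbT.
  split; first exact: undup_uniq.
    move=> w; rewrite mem_undup mem_cat => wi; split.
      by case/orP: wi => [/h1 []|/h2 []].
    by apply: wmulD; [exact: ND | exact: restrP | exact: restrP].
  rewrite big_split /= -!big_mkcond /=.
  by rewrite !big_mem_uniq ?undup_uniq.
- exists [:: w], (fun _ => word w * a); rewrite big_seq1; split=> // v.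
  by rewrite inE => /eqP ->; split=> //; exists a.
Qed.

End SortedSpan.

Section Freeness.
Variables (R : nzRingType) (X : nat -> R) (shift : nat -> {rmorphism R -> {poly R}}).
Hypothesis shiftX : forall M j, shift M (X j) = (X j)%:P + (if j == M then 'X else 0).
Hypothesis torsionfree : forall n (a : R), (0 < n)%N -> a *+ n = 0 -> a = 0.

Local Notation word := (word X).

Definition shift_fixed (g : R) := forall M, shift M g = g%:P.

Lemma shift_fixed0 : shift_fixed 0.
Proof. by move=> M; rewrite rmorph0. Qed.

Lemma shift_fixedB a b : shift_fixed a -> shift_fixed b -> shift_fixed (a - b).
Proof. by move=> fa fb M; rewrite rmorphB fa fb polyCB. Qed.

Lemma shift_fixedMn a n : shift_fixed a -> shift_fixed (a *+ n).
Proof. by move=> fa M; rewrite rmorphMn fa polyCMn. Qed.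

Lemma shift_lieX M a k : shift M (lie a (X k)) = lie (shift M a) (X k)%:P.
Proof.
rewrite /lie rmorphB !rmorphM shiftX; case: (k == M); last by rewrite !addr0.
by rewrite mulrDr mulrDl -(commr_polyX (shift M a)) opprD addrACA subrr addr0.
Qed.

Lemma shift_fixed_lieX g k : shift_fixed g -> shift_fixed (lie g (X k)).
Proof. by move=> fg M; rewrite shift_lieX fg /lie -!polyCM -polyCB. Qed.

Lemma shift_fixed_foldl_lieX a ks : shift_fixed a ->
  shift_fixed (foldl (fun b k => lie b (X k)) a ks).
Proof. by elim: ks a => //= k ks IH a fa; apply/IH/shift_fixed_lieX. Qed.

Lemma shift_fixed_lieXX i j : shift_fixed (lie (X i) (X j)).
Proof.
move=> M; rewrite shift_lieX shiftX lieDl [lie (if _ then _ else _) _]lie_comm.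
  by rewrite addr0 /lie -!polyCM -polyCB.
by case: (i == M); [exact/commr_sym/commr_polyX | exact/commr_sym/commr0].
Qed.

Definition dshift M (a : R) := (shift M a)`_1.

Lemma dshift_sum M (r : seq (seq nat)) (F : seq nat -> R) :
  dshift M (\sum_(w <- r) F w) = \sum_(w <- r) dshift M (F w).
Proof. by rewrite /dshift rmorph_sum coef_sum. Qed.

Lemma dshiftMr M a g : shift_fixed g -> dshift M (a * g) = dshift M a * g.
Proof. by move=> fg; rewrite /dshift rmorphM fg coefMC. Qed.

Lemma shift_word_coef0 M w : (shift M (word w))`_0 = word w.
Proof.
elim: w => [|j w IH]; first by rewrite word_nil rmorph1 coefC.
rewrite word_cons rmorphM coef0M IH shiftX coefD coefC /=.
by case: (j == M); rewrite ?coef0 ?coefX addr0.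
Qed.

Lemma dshift_word_cons M j v : dshift M (word (j :: v)) =
  X j * dshift M (word v) + (if j == M then word v else 0).
Proof.
rewrite /dshift word_cons rmorphM shiftX mulrDl coefD coefCM.
by case: (j == M); rewrite ?coefXM ?shift_word_coef0 ?mul0r ?coef0.
Qed.

Lemma sorted_min_head M w : sorted leq w -> all (leq M) w -> M \in w ->
  w = M :: behead w.
Proof.
case: w => [//|j v] /= sv /andP [Mj _]; rewrite inE => /orP [/eqP -> //|Mv].
by have /allP /(_ M Mv) jM := order_path_min leq_trans sv; rewrite (@anti_leq j M) ?Mj ?jM.
Qed.

Lemma dshift_word M w : sorted leq w -> all (leq M) w ->
  dshift M (word w) = word (behead w) *+ count_mem M w.
Proof.
elim: w => [|j v IH] sw Mw; first by rewrite /dshift word_nil rmorph1 coefC.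
move: (sw) (Mw) => /= /[dup] /path_sorted sv /(order_path_min leq_trans) jv /andP [Mj Mv].
rewrite dshift_word_cons IH //=.
have [->|nMj] := eqVneq j M; last first.
  have nMv : M \notin v.
    by apply/negP=> /(allP jv) jM; move: nMj; rewrite eqn_leq jM Mj.
  by rewrite (count_memPn nMv) mulr0n mulr0 add0r.
have [Mv'|nMv] := boolP (M \in v).
  by rewrite mulrnAr -word_cons -sorted_min_head // -mulrSr.
by rewrite (count_memPn nMv) mulr0n mulr0 add0r.
Qed.

Lemma dshift_word_mul M w a : sorted leq w -> all (leq M) w -> shift_fixed a ->
  dshift M (word w * a) = word (behead w) * (a *+ count_mem M w).
Proof. by move=> sw Mw fa; rewrite dshiftMr // dshift_word // mulrnAl mulrnAr. Qed.

Definition fixed_family (ws : seq (seq nat)) (f : seq nat -> R) :=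
  {in ws, forall w, sorted leq w /\ wmul X shift_fixed w (f w)}.

Section MinimalLetter.
Variables (M : nat) (ws : seq (seq nat)) (f : seq nat -> R).
Hypothesis M_min : {in ws, forall w, all (leq M) w}.
Hypothesis fam : fixed_family ws f.

Let ws_M := [seq behead w | w <- ws & M \in w].
Let f_M v := dshift M (f (M :: v)).

Lemma dshift_family_sum :
  dshift M (\sum_(w <- ws) f w) = \sum_(v <- ws_M) f_M v.
Proof.
rewrite dshift_sum big_map big_filter [LHS](bigID (fun w => M \in w)) /=.
have -> : \sum_(w <- ws | M \notin w) dshift M (f w) = 0.
  rewrite big_seq_cond big1 // => w /andP [wi nMw].
  have [sw [a fa ->]] := fam wi.
  by rewrite dshift_word_mul ?M_min // (count_memPn nMw) mulr0n mulr0.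
rewrite addr0 big_seq_cond [RHS]big_seq_cond; apply: eq_bigr => w /andP [wi Mw].
by have [sw _] := fam wi; rewrite /f_M -sorted_min_head ?M_min.
Qed.

Lemma dshift_family_head w : w \in ws -> M \in w ->
  exists2 a, shift_fixed a &
    f w = word w * a /\ f_M (behead w) = word (behead w) * (a *+ count_mem M w).
Proof.
move=> wi Mw; have [sw [a fa fw]] := fam wi; exists a => //; split=> //.
by rewrite /f_M -sorted_min_head ?M_min // fw dshift_word_mul ?M_min.
Qed.

Lemma dshift_family : fixed_family ws_M f_M.
Proof.
move=> v /mapP [w]; rewrite mem_filter => /andP [Mw wi] ->.
have [a fa [_ ->]] := dshift_family_head wi Mw; split.
  have [sw _] := fam wi; move: (sw).
  by rewrite (sorted_min_head sw (M_min wi) Mw) => /path_sorted.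
by exists (a *+ count_mem M w); first exact: shift_fixedMn.
Qed.

Lemma dshift_family_eq0 w : w \in ws -> M \in w -> f_M (behead w) = 0 -> f w = 0.
Proof.
move=> wi Mw; have [a fa [fw ->]] := dshift_family_head wi Mw.
rewrite mulrnAr => /(torsionfree _) wa0.
have {}wa0 : word (behead w) * a = 0 by apply: wa0; rewrite -has_count has_pred1.
have [sw _] := fam wi.
by rewrite fw (sorted_min_head sw (M_min wi) Mw) word_cons -mulrA wa0 mulr0.
Qed.

Lemma size_family_lt w0 : w0 \in ws -> M \in w0 ->
  (\sum_(v <- ws_M) size v < \sum_(w <- ws) size w)%N /\
  (\sum_(w <- ws | M \notin w) size w < \sum_(w <- ws) size w)%N.
Proof.
move=> w0i Mw0; have w0n0 : (0 < size w0)%N by case: w0 Mw0 {w0i}.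
rewrite big_map big_filter; split; rewrite big_mkcond /=.
- apply: ltn_sum_seq => [w _|]; first by case: ifP => // _; rewrite size_behead leq_pred.
  by exists w0 => //; rewrite Mw0 size_behead prednK.
- apply: ltn_sum_seq => [w _|]; first by case: ifP.
  by exists w0; rewrite ?Mw0.
Qed.

End MinimalLetter.

Lemma fixed_family_filter ws f (P : pred (seq nat)) :
  fixed_family ws f -> fixed_family [seq w <- ws | P w] f.
Proof. by move=> fam w; rewrite mem_filter => /andP [_ /fam]. Qed.

Lemma uniq_behead_min M ws : {in ws, forall w, sorted leq w /\ all (leq M) w} ->
  uniq ws -> uniq [seq behead w | w <- ws & M \in w].
Proof.
move=> hws uws; rewrite map_inj_in_uniq ?filter_uniq // => u v.
rewrite !mem_filter => /andP [Mu /hws [su Mu']] /andP [Mv /hws [sv Mv']] eq_uv.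
by rewrite (sorted_min_head su Mu' Mu) (sorted_min_head sv Mv' Mv) eq_uv.
Qed.

Lemma size_uniq_flatten_nil (ws : seq (seq nat)) : uniq ws -> flatten ws = [::] ->
  (size ws <= 1)%N.
Proof.
move=> uws flat0; apply: (uniq_leq_size (s2 := [:: [::]])) => // w wi.
case: w wi => [|x v] wi; first exact: mem_head.
have : x \in flatten ws by apply/flattenP; exists (x :: v); rewrite ?mem_head.
by rewrite flat0.
Qed.

Theorem sorted_words_free ws f : uniq ws -> fixed_family ws f ->
  \sum_(w <- ws) f w = 0 -> {in ws, forall w, f w = 0}.
Proof.
have [n] : exists n, (\sum_(w <- ws) size w < n)%N by exists (\sum_(w <- ws) size w).+1.
elim: n ws f => // n IH ws f lt_n uws fam sum0.
have [flat0|/eqP] := eqVneq (flatten ws) [::].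
  move: sum0 (size_uniq_flatten_nil uws flat0); case: ws {IH lt_n uws fam flat0} => [|w [|//]] //.
  by rewrite big_seq1 => fw0 _ v; rewrite inE => /eqP ->.
move=> flatn0; have exL : exists x, x \in flatten ws.
  by case: (flatten ws) flatn0 => [//|x s] _; exists x; rewrite mem_head.
case: (ex_minnP exL) => M /flattenP [w0 w0i Mw0] M_le.
have M_min : {in ws, forall w, all (leq M) w}.
  by move=> w wi; apply/allP => x xw; apply: M_le; apply/flattenP; exists w.
have [lt_M lt_nM] := size_family_lt w0i Mw0.
have fM0 : {in ws, forall w, M \in w -> f w = 0}.
  move=> w wi Mw; apply: (dshift_family_eq0 M_min fam wi Mw).
  apply: (IH _ _ _ _ (dshift_family M_min fam)); first exact: leq_trans lt_M lt_n.
  - by apply: uniq_behead_min uws => v /[dup] /fam [sv _] /M_min.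
  - by rewrite -dshift_family_sum // sum0 /dshift rmorph0 coef0.
  - by apply: map_f; rewrite mem_filter Mw.
move=> w wi; have [Mw|nMw] := boolP (M \in w); first exact: fM0.
apply: (IH [seq w <- ws | M \notin w]); rewrite ?filter_uniq ?mem_filter ?nMw //.
- by rewrite big_filter; exact: leq_trans lt_nM lt_n.
- exact: fixed_family_filter.
move: sum0; rewrite big_filter (bigID (fun w => M \in w)) /= big1_seq ?add0r //.
by move=> v /andP [Mv vi]; exact: fM0.
Qed.

Lemma fixed_family_sum_nil ws f p : uniq ws -> fixed_family ws f -> shift_fixed p ->
  p = \sum_(w <- ws) f w -> p = if [::] \in ws then f [::] else 0.
Proof.
(* Compare the given decomposition with [p = word [::] * p]. *)
move=> uws fam fp ep; pose ws' := undup ([::] :: ws).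
pose g w := (if w \in ws then f w else 0) - (if w \in [:: [::]] then p else 0).
have ws'_sub : {subset ws <= ws'} by move=> w wi; rewrite mem_undup inE wi orbT.
have nil_ws' : {subset [:: [::]] <= ws'}.
  by move=> w; rewrite inE => /eqP ->; rewrite mem_undup mem_head.
have famg : fixed_family ws' g.
  move=> w; rewrite mem_undup inE => wi; split.
    by case/orP: wi => [/eqP ->|/fam []].
  apply: wmulB; first exact: shift_fixedB.
    by case: ifP => [/fam [] //|_]; exact/wmul0/shift_fixed0.
  rewrite inE; case: eqP => [->|_]; last exact/wmul0/shift_fixed0.
  by exists p; rewrite // word_nil mul1r.
have : g [::] = 0.
  apply: (sorted_words_free (undup_uniq _) famg _ (nil_ws' _ (mem_head _ _))).
  by rewrite sumrB -!big_mkcond !big_mem_uniq ?undup_uniq // big_seq1 -ep subrr.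
by rewrite /g mem_head => /eqP; rewrite subr_eq0 => /eqP ->.
Qed.

End Freeness.

Definition shift_fmonom (M : nat) (u : {fmonom nat}) : {poly ZX} :=
  \prod_(j <- fmonom_val u) ((xv j)%:P + (if j == M then 'X else 0)).

Lemma shift_fmonom_is_mmorphism M : mmorphism (shift_fmonom M).
Proof. by split=> [u v|]; rewrite /shift_fmonom ?fmM ?fm1 ?big_cat ?big_nil. Qed.

HB.instance Definition _ M :=
  isMultiplicative.Build _ _ (shift_fmonom M) (shift_fmonom_is_mmorphism M).

(* The substitution x_M |-> x_M + t of Z<X> into Z<X>[t]. *)
Definition shiftZX (M : nat) : ZX -> {poly ZX} := mmap intr (shift_fmonom M).

HB.instance Definition _ M := GRing.Additive.copy (shiftZX M) (mmap intr (shift_fmonom M)).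

Lemma shiftZX_is_multiplicative M : GRing.multiplicative (shiftZX M).
Proof. by apply: commr_mmap_is_multiplicative => g m m'; exact/commr_sym/commr_int. Qed.

HB.instance Definition _ M :=
  GRing.isMultiplicative.Build _ _ (shiftZX M) (shiftZX_is_multiplicative M).

Lemma shiftZX_xv M j : shiftZX M (xv j) = (xv j)%:P + (if j == M then 'X else 0).
Proof. by rewrite /shiftZX /xv mmapU /= mul1r /shift_fmonom fmU big_seq1. Qed.

Lemma ZX_torsionfree n (a : ZX) : (0 < n)%N -> a *+ n = 0 -> a = 0.
Proof.
move=> n_gt0 an0; apply/malgP => k; have /eqP := congr1 (mcoeff k) an0.
by rewrite mcoeffMn mcoeff0 mulrn_eq0 eqn0Ngt n_gt0 => /eqP.
Qed.

Lemma malgU_word (k : {fmonom nat}) : << k >> = word xv k :> ZX.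
Proof.
rewrite -[k]fmK; elim: (fmonom_val k) => [|i s IH]; first by rewrite word_nil -fmoneE.
have -> : << FMonom (i :: s) >> = << fmu i >> * << FMonom s >> :> ZX.
  rewrite malgM_def fgmulUU mulr1; congr << _ >>.
  by apply: val_inj; rewrite /= fmM fmU.
by rewrite IH -word_cons.
Qed.

Lemma ZX_word_expansion (r : ZX) :
  exists l : seq (seq nat * int), r = \sum_(y <- l) word xv y.1 *~ y.2.
Proof.
exists [seq (fmonom_val k, r@_k) | k <- finmap.enum_fset (msupp r)].
rewrite big_map {1}(monalgE r); apply: eq_bigr => k _ /=.
by rewrite -malgU_word -[in LHS](intz r@_k) raddfMz.
Qed.

Lemma Gamma0 : Gamma 0.
Proof. by rewrite -(subrr 1); apply: Gamma_add; [|apply: Gamma_opp]; exact: Gamma_1. Qed.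

Lemma Gamma_int (c : int) : Gamma c%:~R.
Proof.
have Gamma_nat n : Gamma n%:R.
  by elim: n => [|n IH]; [exact: Gamma0 | rewrite mulrS; apply: Gamma_add => //; exact: Gamma_1].
by case: c => n; [|rewrite NegzE mulrNz; apply: Gamma_opp]; exact: Gamma_nat.
Qed.

Lemma Gamma_lieX g k : Gamma g -> Gamma (lie g (xv k)).
Proof.
elim=> {g} [|i j ks|a b _ Ga _ Gb|a _ Ga|a b Ga Gla Gb Glb].
- by rewrite /lie mul1r mulr1 subrr; exact: Gamma0.
- by have := Gamma_comm i j (rcons ks k); rewrite /lncomm foldl_rcons.
- by rewrite lieDl; exact: Gamma_add.
- by rewrite lieNl; exact: Gamma_opp.
- by rewrite lieMl; apply: Gamma_add; apply: Gamma_mul.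
Qed.

Lemma Gamma_shift_fixed g : Gamma g -> shift_fixed shiftZX g.
Proof.
elim=> {g} [|i j ks|a b _ Ga _ Gb|a _ Ga|a b _ Ga _ Gb] M.
- by rewrite !rmorph1.
- exact: (shift_fixed_foldl_lieX shiftZX_xv ks (shift_fixed_lieXX shiftZX_xv i j)).
- by rewrite rmorphD Ga Gb polyCD.
- by rewrite rmorphN Ga polyCN.
- by rewrite rmorphM Ga Gb polyCM.
Qed.

Section LeftIdeal.
Variable S : ZX -> Prop.
Hypothesis S_Gamma : forall s, S s -> Gamma s.

Lemma GammaIdeal_Gamma a : GammaIdeal S a -> Gamma a.
Proof.
elim=> {a} [s /S_Gamma //| |a b _ Ga _ Gb|g a Gg _ Ga].
- exact: Gamma0.
- exact: Gamma_add.
- exact: Gamma_mul.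
Qed.

Lemma GammaIdeal_LeftIdeal a : GammaIdeal S a -> LeftIdeal S a.
Proof.
elim=> {a} [s Ss| |a b _ Ia _ Ib|g a _ _ Ia].
- exact: LI_gen.
- exact: LI_0.
- exact: LI_add.
- exact: LI_lmul.
Qed.

Lemma LeftIdeal_sorted_span p :
  LeftIdeal S p -> wspan xv (GammaIdeal S) (sorted leq) p.
Proof.
elim=> {p} [s Ss| |a b _ Ia _ Ib|r a _ Ia].
- by rewrite -[s]mul1r -(word_nil xv); apply: wspan_word => //; exact: GI_gen.
- exact: wspan0.
- exact: wspanD.
have [l ->] := ZX_word_expansion r; rewrite mulr_suml; apply: wspan_sum => y.
apply: (wspan_lmul Ia) => w b _ Ib.
rewrite mulrzAl mulrA -mulrzAr -word_cat -mulrzl.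
apply: (wspan_sorted_word (G := Gamma) Gamma_lieX (fun i j => Gamma_comm i j [::])).
  exact: GI_lmul.
exact: GI_lmul (Gamma_int _) Ib.
Qed.

End LeftIdeal.

Theorem lemma2p4 (S : ZX -> Prop) (hS : forall s, S s -> Gamma s) :
  (forall p : ZX, LeftIdeal S p <->
     exists ws f, sumFamily S ws f /\ p = \sum_(w <- ws) f w) /\
  (forall ws f, sumFamily S ws f -> \sum_(w <- ws) f w = 0 ->
     forall w, w \in ws -> f w = 0) /\
  (forall p : ZX, (LeftIdeal S p /\ Gamma p) <-> GammaIdeal S p).
Proof.
have fixed ws f : sumFamily S ws f -> fixed_family xv shiftZX ws f.
  move=> [_ famS] w /famS [sw [a Ia fw]]; split=> //; exists a => //.
  exact/Gamma_shift_fixed/(GammaIdeal_Gamma hS).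
have span p : LeftIdeal S p <-> exists ws f, sumFamily S ws f /\ p = \sum_(w <- ws) f w.
  split=> [/LeftIdeal_sorted_span /(wspan_family (GI_0 S) (@GI_add S))|].
    by case=> ws [f [uws famS ->]]; exists ws, f.
  case=> ws [f [[_ famS] ->]]; rewrite big_seq.
  apply: big_ind => [||w wi]; [exact: LI_0 | exact: LI_add |].
  have [_ [a Ia ->]] := famS w wi.
  exact/LI_lmul/(GammaIdeal_LeftIdeal Ia).
split=> //; split=> [ws f famS|p].
  exact: (sorted_words_free shiftZX_xv ZX_torsionfree (proj1 famS) (fixed _ _ famS)).
split=> [[/span [ws [f [famS ep]]] Gp]|Ip]; last first.
  by split; [exact: GammaIdeal_LeftIdeal | exact: (GammaIdeal_Gamma hS Ip)].
have fp := Gamma_shift_fixed Gp.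
rewrite (fixed_family_sum_nil shiftZX_xv ZX_torsionfree (proj1 famS) (fixed _ _ famS) fp ep).
case: ifP => [/(proj2 famS) [_ [a Ia ->]]|_]; last exact: GI_0.
by rewrite /mono big_nil mul1r.
Qed.
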